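(* Let $q$ be a prime power, $1\le k\le n-1$, and let $\mathcal{L}$ be a Cameron-Liebler $k$-set of $\mathrm{AG}(n,q)$ with parameter $x$. Then for every $k$-spread $\mathcal{S}$ of $\mathrm{AG}(n,q)$ we have $|\mathcal{L}\cap\mathcal{S}|=x$.
   Context: $\mathrm{AG}(n,q)$ is $\mathrm{PG}(n,q)$ with a hyperplane $\pi_\infty$ removed; affine points are points outside $\pi_\infty$, affine $k$-spaces are $k$-dimensional projective subspaces not contained in $\pi_\infty$ (identified with their sets of affine points). A $k$-spread of $\mathrm{AG}(n,q)$ is a set of affine $k$-spaces that pairwise share no affine point and together cover all affine points. With $A_n$ the incidence matrix of affine points versus affine $k$-spaces, a set $\mathcal{L}$ of affine $k$-spaces is a Cameron-Liebler $k$-set of $\mathrm{AG}(n,q)$ if its characteristic vector lies in the real row space $\mathrm{Im}(A_n^T)$; its parameter is $x=|\mathcal{L}|/\left[{n\atop k}\right]_q$, where $\left[{a\atop b}\right]_q=\frac{(q^a-1)\cdots(q^{a-b+1}-1)}{(q^b-1)\cdots(q-1)}$. *)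

From HB Require Import structures.
From mathcomp Require Import all_boot all_order all_algebra all_field.
From mathcomp Require Import reals.
Set Implicit Arguments. Unset Strict Implicit. Unset Printing Implicit Defensive.
Import GRing.Theory Num.Theory.
Local Open Scope ring_scope.

(* AG(n,q) is modelled as the vector space 'rV[F]_n over a finite field F
   with q = #|F| elements; affine points are vectors, and an affine k-space
   is identified with its set of affine points, i.e. a coset a + W of a
   k-dimensional linear subspace W (row space of a square matrix W). *)

Definition is_affine_space (F : finFieldType) (n k : nat)
  (A : {set 'rV[F]_n}) : bool :=
  [exists a : 'rV[F]_n, exists W : 'M[F]_n,
     (\rank W == k) && (A == [set v | (v - a <= W)%MS])].

Definition affine_spaces (F : finFieldType) (n k : nat)
  : {set {set 'rV[F]_n}} := [set A | @is_affine_space F n k A].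

Definition is_spread (F : finFieldType) (n k : nat)
  (S : {set {set 'rV[F]_n}}) : Prop :=
  [/\ S \subset @affine_spaces F n k,
      (forall A B, A \in S -> B \in S -> A != B -> [disjoint A & B])
    & (forall v : 'rV[F]_n, exists2 A, A \in S & v \in A)].

(* Cameron-Liebler k-set: the characteristic vector of L (indexed by affine
   k-spaces) lies in the real row space Im(A_n^T), i.e. it is a real linear
   combination of the rows of the point/k-space incidence matrix A_n. *)
Definition is_CL_set (R : realType) (F : finFieldType) (n k : nat)
  (L : {set {set 'rV[F]_n}}) : Prop :=
  L \subset @affine_spaces F n k /\
  exists c : 'rV[F]_n -> R,
    forall A, A \in @affine_spaces F n k ->
      ((A \in L)%:R : R) = \sum_(P : 'rV[F]_n) c P * (P \in A)%:R.

Definition gauss_binom (R : realType) (q a b : nat) : R :=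
  \prod_(i < b) ((q%:R ^+ (a - i) - 1) / (q%:R ^+ (i.+1) - 1)).

Definition CL_parameter (R : realType) (F : finFieldType) (n k : nat)
  (L : {set {set 'rV[F]_n}}) : R :=
  (#|L|)%:R / gauss_binom R #|F| n k.

From HB Require Import structures.
From mathcomp Require Import all_boot all_order all_algebra all_field.
From mathcomp Require Import reals.
From mathcomp Require Import zify.

Set Implicit Arguments.
Unset Strict Implicit.
Unset Printing Implicit Defensive.
Import Order.TTheory GRing.Theory Num.Theory.
Local Open Scope ring_scope.

(* Write the indicator of L as [1_A = \sum_P c P * [P \in A]] on affine k-spaces.
   Summing over any family S of k-spaces gives
   [#|L :&: S| = \sum_P c P * #{A in S | P \in A}].  A spread contains exactly
   one space through each point, so [#|L :&: S| = \sum_P c P].  Through each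
   point pass as many affine k-spaces as there are linear k-subspaces, and
   counting ordered bases (row-free k x n matrices, modulo those of size k x k)
   shows that this number is the Gaussian binomial; hence
   [#|L| = [n choose k]_q * \sum_P c P], i.e. [x = \sum_P c P]. *)

Section RowSpaces.
Variables (F : finFieldType) (n : nat).
Local Notation q := #|F|.

Definition row_space m (A : 'M[F]_(m, n)) : {set 'rV[F]_n} := [set v | (v <= A)%MS].

Lemma row_space_eq m1 m2 (A : 'M_(m1, n)) (B : 'M_(m2, n)) :
  (row_space A == row_space B) = (A == B)%MS.
Proof.
apply/eqP/andP => [AB | [sAB sBA]]; last first.
  by apply/setP => v; rewrite !inE; apply/idP/idP => /submx_trans; apply.
split; apply/row_subP => i; move/setP: AB.
  by move/(_ (row i A)); rewrite !inE row_sub => <-.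
by move/(_ (row i B)); rewrite !inE row_sub => ->.
Qed.

Lemma card_row_space m (A : 'M_(m, n)) : #|row_space A| = (q ^ \rank A)%N.
Proof.
have -> : row_space A = [set v *m row_base A | v in 'rV_(\rank A)].
  apply/setP => v; rewrite inE -(eq_row_base A).
  by apply/submxP/imsetP => [] [u]; exists u.
by rewrite card_imset ?card_mx ?mul1n //; apply/row_free_inj/row_base_free.
Qed.

Lemma rank_col_rV_mx m (v : 'rV[F]_n) (A : 'M_(m, n)) :
  \rank (col_mx v A) = (~~ (v <= A)%MS + \rank A)%N.
Proof.
rewrite -addsmxE.
have le_sum := (mxrank_adds_leqif v A).1; have le_v := rank_leq_row v.
have /leqifP := mxrank_leqif_sup (addsmxSr v A).
by rewrite addsmx_sub submx_refl andbT; case: (v <= A)%MS => [/eqP|] /=; lia.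
Qed.

Lemma row_free_col_rV_mx m (v : 'rV[F]_n) (A : 'M_(m, n)) :
  row_free (col_mx v A) = row_free A && ~~ (v <= A)%MS.
Proof.
rewrite /row_free rank_col_rV_mx; case: (v <= A)%MS => /=; last first.
  by rewrite andbT eqSS.
by rewrite andbF add0n ltn_eqF // ltnS rank_leq_row.
Qed.

Lemma card_outside_row_space m (A : 'M_(m, n)) :
  #|[set v : 'rV[F]_n | ~~ (v <= A)%MS]| = (q ^ n - q ^ \rank A)%N.
Proof.
have -> : [set v | ~~ (v <= A)%MS] = ~: row_space A by apply/setP => v; rewrite !inE.
by rewrite cardsCs setCK card_mx mul1n card_row_space.
Qed.

Lemma card_row_free_succ m :
  #|[set A : 'M[F]_(1 + m, n) | row_free A]|
    = (#|[set A : 'M[F]_(m, n) | row_free A]| * (q ^ n - q ^ m))%N.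
Proof.
rewrite -sum1_card (reindex (fun p : 'M_(m, n) * 'rV_n => col_mx p.2 p.1)) /=.
  under eq_bigl => p do rewrite inE row_free_col_rV_mx.
  rewrite -(pair_big_dep _ (fun B v => ~~ (v <= B)%MS) (fun _ _ => 1%N)) /=.
  rewrite -sum_nat_const; apply: eq_big => [B | B]; first by rewrite inE.
  move=> rB; rewrite sum1_card -[in RHS](eqP rB).
  by rewrite -card_outside_row_space; apply: eq_card => v; rewrite inE.
exists (fun A => (dsubmx A, usubmx A)) => [[B v] _ | A _] /=.
  by rewrite col_mxKd col_mxKu.
by rewrite vsubmxK.
Qed.

Lemma card_row_free m :
  #|[set A : 'M[F]_(m, n) | row_free A]| = (\prod_(i < m) (q ^ n - q ^ i))%N.
Proof.
elim: m => [|m IHm]; last by rewrite big_ord_recr /= -IHm card_row_free_succ.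
rewrite big_ord0 (@eq_card1 _ (0 : 'M[F]_(0, n))) // => A.
by rewrite !inE [A]flatmx0 /row_free mxrank0 !eqxx.
Qed.

Definition linear_spaces k : {set {set 'rV[F]_n}} :=
  [set row_space W | W : 'M[F]_n & \rank W == k].

Lemma card_eqmx_row_free k (B : 'M[F]_(k, n)) : row_free B ->
  #|[set A : 'M_(k, n) | (A == B)%MS]| = #|[set M : 'M[F]_k | row_free M]|.
Proof.
move=> fB; rewrite -[RHS](card_imset _ (row_free_inj fB)); apply: eq_card => A.
rewrite inE; apply/idP/imsetP => [eqAB | [M /[!inE] fM ->]].
  have sAB : (A <= B)%MS by case/andP: eqAB.
  exists (A *m pinvmx B); last by rewrite mulmxKpV.
  by rewrite inE /row_free -(mxrankMfree _ fB) mulmxKpV // (eqmx_rank eqAB).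
by apply/eqmxP/eqmxMfull; rewrite row_full_unit -row_free_unit.
Qed.

Lemma card_linear_spaces k :
  (#|linear_spaces k| * #|[set M : 'M[F]_k | row_free M]|
    = #|[set A : 'M[F]_(k, n) | row_free A]|)%N.
Proof.
rewrite -sum_nat_const -[RHS]sum1_card.
rewrite (partition_big (@row_space k) (mem (linear_spaces k))) => [|A]; last first.
  rewrite inE => fA; apply/imsetP; exists <<A>>%MS; first by rewrite inE mxrank_gen.
  by apply/eqP; rewrite row_space_eq; apply/eqmxP/eqmx_sym/genmxE.
apply: eq_bigr => _ /imsetP [W /[!inE] rW ->].
have [B fB eqBW] : exists2 B : 'M_(k, n), row_free B & (B :=: W)%MS.
  by rewrite -(eqP rW); exists (row_base W); [apply: row_base_free | apply: eq_row_base].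
rewrite -(card_eqmx_row_free fB) sum1dep_card.
apply: eq_card => A; rewrite !inE row_space_eq -!eqBW.
apply/idP/and3P => [eqAB | [_ sAB sBA]]; last exact/andP.
by rewrite /row_free (eqmx_rank eqAB); case/andP: eqAB.
Qed.

Definition translate (P : 'rV[F]_n) (V : {set 'rV[F]_n}) := [set v | v - P \in V].

Lemma translate_inj P : injective (translate P).
Proof.
move=> V1 V2 /setP eqV; apply/setP => v.
by have := eqV (v + P); rewrite !inE addrK.
Qed.

Lemma affine_coset_translate (a P : 'rV[F]_n) (W : 'M_n) : (P - a <= W)%MS ->
  [set v | (v - a <= W)%MS] = translate P (row_space W).
Proof.
have addmx_subr (u w : 'rV[F]_n) : (w <= W)%MS -> ((u + w)%R <= W)%MS = (u <= W)%MS.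
  move=> sw; apply/idP/idP => [suw | su]; last exact: addmx_sub su sw.
  by rewrite -(addrK w u); apply: addmx_sub suw _; rewrite eqmx_opp.
move=> sPa; apply/setP => v; rewrite !inE.
by rewrite -(addmx_subr (v - P) _ sPa) addrA subrK.
Qed.

Lemma affine_spaces_through k (P : 'rV[F]_n) :
  [set A in affine_spaces F n k | P \in A] = translate P @: linear_spaces k.
Proof.
apply/setP => A; rewrite !inE.
apply/andP/imsetP => [[] | [_ /imsetP [W /[!inE] rW ->] ->]].
  move=> /existsP [a /existsP [W /andP [rW /eqP ->]]]; rewrite inE => sPa.
  exists (row_space W); first by apply/imsetP; exists W; rewrite ?inE.
  exact: affine_coset_translate.
split; last by rewrite !inE subrr sub0mx.
apply/existsP; exists P; apply/existsP; exists W.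
by rewrite rW /=; apply/eqP/setP => v; rewrite !inE.
Qed.

Lemma card_affine_spaces_through k (P : 'rV[F]_n) :
  #|[set A in affine_spaces F n k | P \in A]| = #|linear_spaces k|.
Proof. by rewrite affine_spaces_through card_imset //; apply: translate_inj. Qed.

End RowSpaces.

Section GaussianBinomial.
Variables (R : realType) (q : nat).
Hypothesis q_gt1 : (1 < q)%N.

Lemma expr_natr_sub1_neq0 m : (0 < m)%N -> (q%:R : R) ^+ m - 1 != 0.
Proof. by move=> m_gt0; rewrite subr_eq0 gt_eqF // exprn_egt1 ?ltr1n // -lt0n. Qed.

Lemma natr_expnB i m : (i <= m)%N ->
  ((q ^ m - q ^ i)%N%:R : R) = q%:R ^+ i * (q%:R ^+ (m - i) - 1).
Proof.
move=> le_im; rewrite natrB ?leq_pexp2l ?(ltnW q_gt1) //.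
by rewrite !natrX mulrBr mulr1 -exprD subnKC.
Qed.

Lemma gauss_binom_neq0 n k : (k <= n)%N -> gauss_binom R q n k != 0.
Proof.
move=> le_kn; apply/prodf_neq0 => i _.
by rewrite mulf_neq0 ?invr_eq0 ?expr_natr_sub1_neq0 // subn_gt0 (leq_trans _ le_kn).
Qed.

Lemma gauss_binom_prod n k : (k <= n)%N ->
  gauss_binom R q n k * (\prod_(i < k) (q ^ k - q ^ i))%N%:R
    = (\prod_(i < k) (q ^ n - q ^ i))%N%:R.
Proof.
move=> le_kn; rewrite !natr_prod.
under eq_bigr => i _ do rewrite natr_expnB 1?ltnW //.
under [RHS]eq_bigr => i _ do rewrite natr_expnB 1?ltnW ?(leq_trans _ le_kn) //.
rewrite !big_split /= mulrCA; congr (_ * _).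
rewrite (reindex_inj rev_ord_inj) /=.
under eq_bigr => i _ do rewrite subKn //.
rewrite /gauss_binom big_split /= prodfV divfK //.
by apply/prodf_neq0 => i _; apply: expr_natr_sub1_neq0.
Qed.

End GaussianBinomial.

Lemma card_linear_spaces_gauss (R : realType) (F : finFieldType) n k :
  (k <= n)%N -> (#|linear_spaces F n k|%:R : R) = gauss_binom R #|F| n k.
Proof.
move=> le_kn; have q_gt1 := card_finNzRing_gt1 F.
apply: (@mulIf _ (\prod_(i < k) (#|F| ^ k - #|F| ^ i))%N%:R).
  rewrite pnatr_eq0 -lt0n prodn_gt0 // => i.
  by rewrite subn_gt0 ltn_exp2l.
by rewrite gauss_binom_prod // -natrM -!card_row_free card_linear_spaces.
Qed.

Lemma sum_natr_indicator (R : pzSemiRingType) (T : finType)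
    (S : {pred T}) (Q : pred T) :
  \sum_(A in S) ((Q A)%:R : R) = #|[set A in S | Q A]|%:R.
Proof.
rewrite -sum1dep_card natr_sum big_mkcondr /=.
by apply: eq_bigr => A _; case: (Q A).
Qed.

Lemma card_setI_incidence (R : pzSemiRingType) (T : finType)
    (U L S : {set {set T}}) (c : T -> R) :
  S \subset U ->
  (forall A, A \in U -> (A \in L)%:R = \sum_(P : T) c P * (P \in A)%:R) ->
  #|L :&: S|%:R = \sum_(P : T) c P * #|[set A in S | P \in A]|%:R.
Proof.
move=> sSU Lc; have -> : #|L :&: S| = #|[set A in S | A \in L]|.
  by apply: eq_card => A; rewrite !inE andbC.
rewrite -sum_natr_indicator (eq_bigr _ (fun A SA => Lc A (subsetP sSU A SA))).
rewrite exchange_big /=; apply: eq_bigr => P _.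
by rewrite -sum_natr_indicator mulr_sumr.
Qed.

Lemma card_spread_through (F : finFieldType) n k (S : {set {set 'rV[F]_n}}) P :
  is_spread k S -> #|[set A in S | P \in A]| = 1%N.
Proof.
case=> _ disjS coverS; have [A0 SA0 PA0] := coverS P.
apply: (@eq_card1 _ A0) => A; rewrite !inE.
apply/andP/eqP => [[SA PA] | -> //]; apply/eqP; apply: contraTT PA => neqA.
by rewrite (disjointFr (disjS _ _ SA0 SA _)) // eq_sym.
Qed.

Theorem lemma3p2 (R : realType) (F : finFieldType) (n k : nat)
  (L : {set {set 'rV[F]_n}}) (x : R) :
  (1 <= k)%N -> (k <= n - 1)%N ->
  @is_CL_set R F n k L -> x = @CL_parameter R F n k L ->
  forall S : {set {set 'rV[F]_n}}, @is_spread F n k S ->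
  (#|L :&: S|)%:R = x.
Proof.
move=> _ le_k_n1 [sLA [c Lc]] -> S spreadS.
have le_kn : (k <= n)%N by rewrite (leq_trans le_k_n1) ?leq_subr.
have cardL : #|L| = #|L :&: affine_spaces F n k| by rewrite (setIidPl sLA).
have [sSA _ _] := spreadS.
rewrite /CL_parameter cardL !(card_setI_incidence _ Lc) //.
under eq_bigr => P _ do rewrite (card_spread_through _ spreadS) mulr1.
under [X in _ = X / _]eq_bigr => P _
  do rewrite card_affine_spaces_through card_linear_spaces_gauss //.
by rewrite -mulr_suml mulfK // gauss_binom_neq0 // card_finNzRing_gt1.
Qed.
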